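(* Consider a network given by a finite directed graph whose vertex set consists of one or more gateway nodes together with $N\ge 1$ non-gateway nodes indexed by $\Gamma=\{1,\dots,N\}$, and whose directed edges (links) are indexed by $\Lambda=\{1,\dots,L\}$. For each non-gateway node $i\in\Gamma$ let $I_i\subseteq\Lambda$ be the set of links entering $i$ and $O_i\subseteq\Lambda$ the set of links leaving $i$. Let $S_l>0$ ($l\in\Lambda$), $n>0$ and $I_{k\to l}\ge 0$ ($k,l\in\Lambda$, $k\neq l$) be given, and for every nonempty $A\subseteq\Lambda$ and $l\in A$ define $$\gamma_{l,A}=\log\Big(1+\frac{S_l}{n+\sum_{k\in A\setminus\{l\}} I_{k\to l}}\Big).$$ Let $\alpha_i>0$ ($i\in\Gamma$) be given weights. Consider the linear program, over variables $x_A$ (one for each nonempty $A\subseteq\Lambda$), $r_l$ ($l\in\Lambda$), $d_i$ ($i\in\Gamma$) and $d$: maximize $d$ subject to $\sum_{A} x_A=1$; $r_l=\sum_{A\ni l} x_A\gamma_{l,A}$ for all $l\in\Lambda$; $\sum_{l\in I_i} r_l-\sum_{k\in O_i} r_k=d_i$ for all $i\in\Gamma$; $d_i\ge \alpha_i d$ for all $i\in\Gamma$; $x_A\ge 0$ for all nonempty $A\subseteq\Lambda$. Then this linear program has an optimal solution in which at most $N$ of the variables $x_A$ are nonzero. *)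

From Stdlib Require Import Reals.
From mathcomp Require Import all_boot.
Set Implicit Arguments. Unset Strict Implicit. Unset Printing Implicit Defensive.

Open Scope R_scope.

(* Vertices: G gateway nodes (inl) and N non-gateway nodes (inr, i.e. Gamma). *)
Definition vertex (G N : nat) : finType := ('I_G + 'I_N)%type.


Definition gamma (L : nat) (S : 'I_L -> R) (n : R) (Intf : 'I_L -> 'I_L -> R)
  (l : 'I_L) (A : {set 'I_L}) : R :=
  ln (1 + S l / (n + \big[Rplus/R0]_(k | (k \in A) && (k != l)) Intf k l)).

(* Feasibility of (x, r, dv, d) for the LP. x is indexed by all subsets of
   Lambda; only nonempty subsets are variables (the value at set0 is unused). *)
Definition feasible (G N L : nat) (src dst : 'I_L -> vertex G N)
  (S : 'I_L -> R) (n : R) (Intf : 'I_L -> 'I_L -> R) (alpha : 'I_N -> R)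
  (x : {set 'I_L} -> R) (r : 'I_L -> R) (dv : 'I_N -> R) (d : R) : Prop :=
  (\big[Rplus/R0]_(A : {set 'I_L} | A != set0) x A = 1) /\
  (forall l : 'I_L, r l = \big[Rplus/R0]_(A : {set 'I_L} | (A != set0) && (l \in A))
                             (x A * gamma S n Intf l A)) /\
  (forall i : 'I_N, \big[Rplus/R0]_(l : 'I_L | dst l == inr i) r l
                    - \big[Rplus/R0]_(k : 'I_L | src k == inr i) r k = dv i) /\
  (forall i : 'I_N, dv i >= alpha i * d) /\
  (forall A : {set 'I_L}, A != set0 -> x A >= 0).

Definition optimal (G N L : nat) (src dst : 'I_L -> vertex G N)
  (S : 'I_L -> R) (n : R) (Intf : 'I_L -> 'I_L -> R) (alpha : 'I_N -> R)
  (x : {set 'I_L} -> R) (r : 'I_L -> R) (dv : 'I_N -> R) (d : R) : Prop :=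
  feasible src dst S n Intf alpha x r dv d /\
  (forall x' r' dv' d', feasible src dst S n Intf alpha x' r' dv' d' -> d' <= d).

(* Divide the constraint of node i by alpha_i: the program maximizes d over
   the points x of the probability simplex on the nonempty link sets subject to
   the N linear constraints d <= c_i . x.  From a feasible point (x, d) that
   admits a direction keeping the active constraints tight, one moves along it
   (or its opposite) until a coordinate of x vanishes or a new constraint
   becomes tight, without decreasing d; this terminates at a basic point, where
   no such direction exists.  Counting unknowns against equations, a basic
   point has no more nonzero coordinates than active constraints, hence at
   most N.  A basic point is determined by its support and active set, so the
   values at basic points form a finite set, and the largest one is optimal. *)

From Stdlib Require Import Reals ClassicalEpsilon.
From mathcomp Require Import all_boot all_order all_algebra.
From mathcomp Require Import Rstruct lra.
Import Order.TTheory GRing.Theory Num.Theory.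
Set Implicit Arguments. Unset Strict Implicit. Unset Printing Implicit Defensive.
Open Scope R_scope.
Local Open Scope ring_scope.

Lemma homogeneous_system_nontrivial (F : fieldType) (U E : finType)
    (T : {set U}) (Q : {set E}) (a : E -> U -> F) :
  (#|Q| < #|T|)%N ->
  exists y : U -> F, [/\ exists u, y u != 0, forall u, u \notin T -> y u = 0
    & forall e, e \in Q -> \sum_u a e u * y u = 0].
Proof.
move=> ltQT; pose M : 'M[F]_(#|T|, #|Q|) := \matrix_(j, k) a (enum_val k) (enum_val j).
have /rowV0Pn[w /sub_kermxP wM0 w_neq0] : kermx M != 0.
  by rewrite kermx_eq0 /row_free neq_ltn (leq_ltn_trans (rank_leq_col M)).
pose y u := \sum_(j | enum_val j == u) w 0 j.
have y_enum j : y (enum_val j) = w 0 j.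
  by rewrite /y (big_pred1 j) // => j'; rewrite /= (inj_eq enum_val_inj).
have y_out u : u \notin T -> y u = 0.
  move=> uT; rewrite /y big_pred0 // => j; apply: contraNF uT => /eqP <-.
  exact: enum_valP.
exists y; split=> // [|e eQ].
  have [j wj] : exists j, w 0 j != 0.
    apply/existsP; apply: contraNT w_neq0 => /existsPn wj0.
    by apply/eqP/rowP => j; rewrite mxE; apply/eqP/negPn/wj0.
  by exists (enum_val j); rewrite y_enum.
rewrite (bigID [in T]) /= [X in _ + X]big1 => [|u /y_out ->]; last by rewrite mulr0.
rewrite addr0 big_enum_val; have := congr1 (fun m : 'M_(1, #|Q|) => m 0 (enum_rank_in eQ e)) wM0.
rewrite !mxE => wQe; rewrite -[RHS]wQe; apply: eq_bigr => j _.
by rewrite mxE enum_rankK_in // y_enum mulrC.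
Qed.

Lemma sumr_option (M : nmodType) (V : finType) (f : option V -> M) :
  \sum_(u : option V) f u = f None + \sum_v f (Some v).
Proof.
rewrite (bigD1 None) //= (reindex_omap Some id) => [|[]//].
by congr (_ + _); apply: eq_bigl => v; rewrite eqxx.
Qed.

Lemma functional_rel_max (disp : Order.disp_t) (T : orderType disp) (K : finType)
    (rel : K -> T -> Prop) :
  (forall k a b, rel k a -> rel k b -> a = b) -> (exists k a, rel k a) ->
  exists k a, rel k a /\ forall k' b, rel k' b -> (b <= a)%O.
Proof.
move=> rel_fun [k0 [a0 rel0]].
pose dom k := if excluded_middle_informative (exists a, rel k a) then true else false.
have domP k : dom k <-> exists a, rel k a.
  by rewrite /dom; case: excluded_middle_informative.
have [f f_rel] : exists f : K -> T, forall k, dom k -> rel k (f k).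
  apply: (choice (fun k b => dom k -> rel k b)) => k.
  have [[a ka] | no_a] := classic (exists a, rel k a); first by exists a.
  by exists a0 => /domP.
have [k dom_k k_max] := @arg_maxP _ _ _ k0 dom f (proj2 (domP k0) (ex_intro _ a0 rel0)).
exists k, (f k); split=> [|k' b k'b]; first exact: f_rel.
have dom_k' : dom k' by apply/domP; exists b.
by rewrite (rel_fun _ _ _ k'b (f_rel _ dom_k')); apply: k_max.
Qed.

Section SparseOptimum.
Variables (F : realFieldType) (V : finType) (P : pred V) (N : nat).
Variable c : 'I_N -> V -> F.

Definition lform i (x : V -> F) := \sum_(v | P v) c i v * x v.

Definition admissible (x : V -> F) (d : F) := [/\ forall v, P v -> 0 <= x v,
  \sum_(v | P v) x v = 1 & forall i, d <= lform i x].

Definition support (x : V -> F) : {set V} := [set v | P v & x v != 0].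

Definition active (x : V -> F) (d : F) : {set 'I_N} := [set i | lform i x == d].

Definition is_direction (T : {set V}) (I : {set 'I_N}) (y : V -> F) (del : F) :=
  [/\ (exists v, y v != 0) \/ del != 0, forall v, v \notin T -> y v = 0,
      \sum_(v | P v) y v = 0 & forall i, i \in I -> lform i y = del].

Definition basic (x : V -> F) (d : F) :=
  admissible x d /\ ~ exists y del, is_direction (support x) (active x d) y del.

Definition potential (x : V -> F) (d : F) := (#|support x| + #|~: active x d|)%N.

Definition ray (x y : V -> F) (t : F) v := x v + t * y v.

Lemma lform_ray i x y t : lform i (ray x y t) = lform i x + t * lform i y.
Proof. by rewrite /lform mulr_sumr -big_split; apply: eq_bigr => v _; rewrite mulrDr mulrCA. Qed.

Lemma is_directionN T I y del : is_direction T I y del ->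
  is_direction T I (fun v => - y v) (- del).
Proof.
case=> nz yT ysum yI; split.
- by case: nz => [[v yv]|del0]; [left; exists v | right]; rewrite oppr_eq0.
- by move=> v /yT ->; rewrite oppr0.
- by rewrite sumrN ysum oppr0.
- move=> i /yI <-; rewrite /lform -sumrN.
  by apply: eq_bigr => v _; rewrite mulrN.
Qed.

Lemma sum_support x (g : V -> F) :
  (forall v, v \notin support x -> g v = 0) -> \sum_(v | P v) g v = \sum_v g v.
Proof.
move=> g0; rewrite [RHS](bigID P) /= [X in _ + X]big1 ?addr0 // => v Pv.
by apply: g0; rewrite inE (negbTE Pv).
Qed.

(* [(y, del)] solves a homogeneous system with one unknown per support element
   plus one, and one equation per active constraint plus one. *)
Lemma card_support_basic x d : basic x d -> (#|support x| <= N)%N.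
Proof.
case=> _ no_dir; apply: (@leq_trans #|active x d|); last first.
  by rewrite -[X in (_ <= X)%N]card_ord max_card.
rewrite leqNgt; apply/negP => lt_act; apply: no_dir.
have card_opt (W : finType) (A : {set W}) : #|None |: (Some @: A)| = #|A|.+1.
  rewrite cardsU1 card_imset => [|? ? [] //].
  by case: imsetP => // -[].
have mem_opt (W : finType) (A : {set W}) w : (Some w \in None |: (Some @: A)) = (w \in A).
  by rewrite in_setU1 mem_imset //; apply: Some_inj.
pose a (e : option 'I_N) (u : option V) := match e, u with
  | None, Some _ => 1 | None, None => 0
  | Some i, Some v => c i v | Some i, None => -1 end.
have := @homogeneous_system_nontrivial F _ _ (None |: (Some @: support x))
  (None |: (Some @: active x d)) a.
rewrite !card_opt => /(_ lt_act) [sol [[u sol_u] sol_out sol_eq]].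
have sol_supp v : v \notin support x -> sol (Some v) = 0.
  by move=> vx; apply: sol_out; rewrite mem_opt.
exists (fun v => sol (Some v)), (sol None); split=> //.
- by case: u sol_u => [v|] ?; [left; exists v | right].
- have := sol_eq None; rewrite !inE eqxx sumr_option mul0r add0r => /(_ isT) sum0.
  rewrite (@sum_support x (fun v => sol (Some v))) // -[RHS]sum0.
  by apply: eq_bigr => v _; rewrite mul1r.
- move=> i iA; have := sol_eq (Some i); rewrite mem_opt => /(_ iA).
  rewrite sumr_option mulN1r addrC => /eqP; rewrite subr_eq0 => /eqP <-; rewrite /lform.
  by apply: sum_support => v /sol_supp ->; rewrite mulr0.
Qed.

Lemma basic_value_unique x1 d1 x2 d2 : basic x1 d1 -> admissible x2 d2 ->
  support x2 = support x1 -> active x2 d2 = active x1 d1 -> d1 = d2.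
Proof.
case=> -[x1_ge0 x1_sum _] no_dir [_ x2_sum _] supp12 act12.
case: (eqVneq d1 d2) => // d12; case: no_dir.
pose y v := if P v then x1 v - x2 v else 0.
have yE v : P v -> y v = x1 v - x2 v by rewrite /y => ->.
exists y, (d1 - d2); split.
- by right; rewrite subr_eq0.
- rewrite /y => v; case Pv: (P v) => // vx1.
  have vx2 : v \notin support x2 by rewrite supp12.
  by move: vx1 vx2; rewrite !inE Pv !negbK => /eqP-> /eqP->; rewrite subr0.
- by rewrite (eq_bigr _ yE) sumrB x1_sum x2_sum subrr.
- move=> i i1; have i2 : i \in active x2 d2 by rewrite act12.
  move: i1 i2; rewrite !inE => /eqP <- /eqP <-; rewrite /lform -sumrB.
  by apply: eq_bigr => v Pv; rewrite yE // mulrBr.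
Qed.

Section Ray.
Variables (x : V -> F) (d : F) (y : V -> F) (del : F).
Hypotheses (x_adm : admissible x d) (y_dir : is_direction (support x) (active x d) y del).
Hypothesis del_ge0 : 0 <= del.

(* The constraints that can stop the ray [t |-> (ray x y t, d + t * del)]: a
   coordinate of the support that decreases, or an inactive constraint whose
   slack decreases; [step_length e] is the time at which [e] becomes tight. *)
Definition blocking (e : V + 'I_N) := match e with
  | inl v => (v \in support x) && (y v < 0)
  | inr i => (i \notin active x d) && (lform i y < del) end.

Definition step_length (e : V + 'I_N) := match e with
  | inl v => x v / - y v
  | inr i => (lform i x - d) / (del - lform i y) end.

Lemma blocking_exists : (0 < N)%N -> exists e, blocking e.
Proof.
move=> N_gt0; case: y_dir => nz y_out y_sum y_act.
have y_supp v : y v != 0 -> v \in support x.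
  by move=> yv; apply: contraNT yv => /y_out ->.
have [v yv | y0] := pickP [pred v | y v != 0].
  have v_supp := y_supp v yv.
  have [w /andP[Pw yw] | y_ge0] := pickP [pred w | P w && (y w < 0)].
    by exists (inl w); rewrite /= yw andbT y_supp ?(lt_eqF yw).
  have y_nneg w : P w -> 0 <= y w.
    by move=> Pw; have := y_ge0 w; rewrite /= Pw leNgt => /= ->.
  have Pv : P v by move: v_supp; rewrite inE => /andP[].
  by move: yv; rewrite /= (psumr_eq0P y_nneg y_sum Pv) eqxx.
have y_eq0 w : y w = 0 by apply/eqP/negbFE/y0.
have lform_y0 i : lform i y = 0.
  by rewrite /lform big1 // => w _; rewrite y_eq0 mulr0.
have del_gt0 : 0 < del.
  by rewrite lt_def del_ge0 andbT; case: nz => // -[w]; rewrite y_eq0 eqxx.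
exists (inr (Ordinal N_gt0)); rewrite /= lform_y0 del_gt0 andbT.
by apply: contraL (del_gt0) => /y_act; rewrite lform_y0 => <-; rewrite ltxx.
Qed.

Lemma step_length_ge0 e : blocking e -> 0 <= step_length e.
Proof.
case: x_adm => x_ge0 _ x_lb; case: e => [v|i] /= /andP[e_supp e_neg].
  move: e_supp; rewrite inE => /andP[Pv _].
  by rewrite divr_ge0 ?x_ge0 // oppr_ge0 ltW.
by rewrite divr_ge0 // subr_ge0 ?x_lb // ltW.
Qed.

Lemma admissible_ray t : 0 <= t -> (forall e, blocking e -> t <= step_length e) ->
  admissible (ray x y t) (d + t * del).
Proof.
case: x_adm y_dir => x_ge0 x_sum x_lb [_ y_out y_sum y_act] t_ge0 t_le.
split=> [v Pv | | i].
- rewrite /ray; case: (leP 0 (y v)) => [y_ge0 | y_neg].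
    by rewrite addr_ge0 ?x_ge0 ?mulr_ge0.
  have v_supp : v \in support x.
    by apply: contraLR y_neg => /y_out ->; rewrite ltxx.
  have := t_le (inl v); rewrite /= v_supp y_neg ler_pdivlMr ?oppr_gt0 // mulrN.
  move=> /(_ isT); lra.
- by rewrite big_split /= -mulr_sumr x_sum y_sum mulr0 addr0.
rewrite lform_ray; case i_act: (i \in active x d).
  by move: i_act (y_act _ i_act); rewrite inE => /eqP -> ->.
case: (leP del (lform i y)) => [del_le | lt_del].
  by have := x_lb i; have := ler_wpM2l t_ge0 del_le; lra.
have := t_le (inr i); rewrite /= i_act lt_del ler_pdivlMr ?subr_gt0 // mulrBr.
move=> /(_ isT); lra.
Qed.

Lemma support_ray t : support (ray x y t) \subset support x.
Proof.
case: y_dir => _ y_out _ _; apply/subsetP => v; rewrite !inE /ray => /andP[Pv].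
rewrite Pv /=; apply: contraNN => x0.
have /y_out -> : v \notin support x by rewrite inE Pv x0.
by move/eqP: x0 => ->; rewrite mulr0 addr0.
Qed.

Lemma active_ray t : active x d \subset active (ray x y t) (d + t * del).
Proof.
case: y_dir => _ _ _ y_act; apply/subsetP => i i_act.
by move: (i_act) (y_act _ i_act); rewrite !inE lform_ray => /eqP -> ->.
Qed.

Lemma potential_ray e : blocking e ->
  (potential (ray x y (step_length e)) (d + step_length e * del) < potential x d)%N.
Proof.
move=> blk; set t := step_length e.
suff : support (ray x y t) \proper support x \/
    active x d \proper active (ray x y t) (d + t * del).
  have supp_le := subset_leq_card (support_ray t).
  have act_le : (#|~: active (ray x y t) (d + t * del)| <= #|~: active x d|)%N.
    by rewrite subset_leq_card // setCS active_ray.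
  case=> [supp_lt | act_lt]; rewrite /potential.
    by rewrite -addSn leq_add // proper_card.
  by rewrite -addnS leq_add // proper_card // properC.
case: e blk @t => [v|i] /= /andP[e_supp e_neg].
  left; rewrite properEneq support_ray andbT; apply: contraTneq e_supp => <-.
  by rewrite inE /ray invrN mulrN mulNr divfK ?subrr ?eqxx ?andbF // lt_eqF.
right; rewrite properEneq active_ray andbT; apply: contraNneq e_supp => ->.
have slack_neq0 : del - lform i y != 0 by rewrite subr_eq0 gt_eqF.
rewrite inE lform_ray; apply/eqP; have := divfK slack_neq0 (lform i x - d).
rewrite mulrBr; lra.
Qed.

End Ray.

Lemma improve_nonbasic x d : (0 < N)%N -> admissible x d -> ~ basic x d ->
  exists x' d', [/\ admissible x' d', d <= d' & (potential x' d' < potential x d)%N].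
Proof.
move=> N_gt0 x_adm not_basic.
have [y [del [y_dir del_ge0]]] : exists y del,
    is_direction (support x) (active x d) y del /\ 0 <= del.
  have [[y [del y_dir]] | no_dir] := classic (exists y del,
    is_direction (support x) (active x d) y del); last by case: not_basic.
  have [del_ge0 | /ltW del_le0] := leP 0 del; first by exists y, del.
  by exists (fun v => - y v), (- del); split; [exact: is_directionN | rewrite oppr_ge0].
have [e0 blk0] := blocking_exists y_dir del_ge0 N_gt0.
have [e blk e_min] := arg_minP (step_length x d y del) blk0.
have t_ge0 := step_length_ge0 x_adm blk.
exists (ray x y (step_length x d y del e)), (d + step_length x d y del e * del).
split; first exact: admissible_ray.
- by have := mulr_ge0 t_ge0 del_ge0; lra.
- exact: potential_ray.
Qed.

Lemma basic_above x d : (0 < N)%N -> admissible x d ->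
  exists x' d', basic x' d' /\ d <= d'.
Proof.
move=> N_gt0; have [m] := ubnP (potential x d).
elim: m x d => // m IH x d lt_pm x_adm.
have [x_basic | not_basic] := classic (basic x d); first by exists x, d.
have [x' [d' [x'_adm le_dd' lt_p]]] := improve_nonbasic N_gt0 x_adm not_basic.
have [x'' [d'' [x''_basic le_d'd'']]] := IH x' d' (leq_trans lt_p lt_pm) x'_adm.
by exists x'', d''; split=> //; apply: le_trans le_d'd''.
Qed.

Theorem sparse_optimum : (0 < N)%N -> (exists v, P v) ->
  exists x d, [/\ admissible x d, forall x' d', admissible x' d' -> d' <= d
    & (#|support x| <= N)%N].
Proof.
move=> N_gt0 [v0 Pv0].
pose x0 v : F := (v == v0)%:R.
have x0_adm : admissible x0 (lform (Order.arg_min (Ordinal N_gt0) xpredT (lform^~ x0)) x0).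
  split=> [v _ | | i]; first by rewrite ler0n.
    rewrite (bigD1 v0) //= /x0 eqxx big1 ?addr0 // => v /andP[_].
    by move/negbTE ->.
  by case: arg_minP => // j _; apply.
have [xb [db [xb_basic _]]] := basic_above N_gt0 x0_adm.
pose basic_value k a := exists x, basic x a /\ k = (support x, active x a).
have value_fun k a b : basic_value k a -> basic_value k b -> a = b.
  move=> [x1 [x1_basic ->]] [x2 [[x2_adm _] [supp12 act12]]].
  exact: basic_value_unique x1_basic x2_adm (esym supp12) (esym act12).
have [k [a [[x [x_basic _]] a_max]]] := functional_rel_max value_fun
  (ex_intro _ _ (ex_intro _ db (ex_intro _ xb (conj xb_basic erefl)))).
exists x, a; split; [by case: x_basic | | exact: card_support_basic x_basic].
move=> x' d' x'_adm; have [x'' [d'' [x''_basic le_d'd'']]] := basic_above N_gt0 x'_adm.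
by apply: le_trans le_d'd'' (a_max _ _ _); exists x''.
Qed.

End SparseOptimum.

Section Network.
Variables (G N L : nat) (src dst : 'I_L -> vertex G N).
Variables (S : 'I_L -> R) (n : R) (Intf : 'I_L -> 'I_L -> R) (alpha : 'I_N -> R).
Hypothesis alpha_pos : forall i, 0 < alpha i.

Definition link_rate (A : {set 'I_L}) l := if l \in A then gamma S n Intf l A else 0.

Definition net_inflow (i : 'I_N) (A : {set 'I_L}) :=
  \sum_(l | dst l == inr i) link_rate A l - \sum_(k | src k == inr i) link_rate A k.

Definition rate (x : {set 'I_L} -> R) l :=
  \sum_(A | (A != set0) && (l \in A)) x A * gamma S n Intf l A.

Definition node_balance x (i : 'I_N) :=
  \sum_(l | dst l == inr i) rate x l - \sum_(k | src k == inr i) rate x k.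

Definition weighted_inflow i A := net_inflow i A / alpha i.

Lemma sum_rate x (D : pred 'I_L) :
  \sum_(l | D l) rate x l = \sum_(A | A != set0) x A * \sum_(l | D l) link_rate A l.
Proof.
rewrite /rate; under eq_bigr do rewrite big_mkcondr /=.
rewrite exchange_big; apply: eq_bigr => A _; rewrite mulr_sumr.
by apply: eq_bigr => l _; rewrite /link_rate; case: ifP; rewrite ?mulr0.
Qed.

Lemma lform_weighted_inflow x i :
  lform [pred A | A != set0] weighted_inflow i x = node_balance x i / alpha i.
Proof.
rewrite /node_balance !sum_rate -sumrB mulr_suml; apply: eq_bigr => A _.
by rewrite -mulrBr mulrC mulrA.
Qed.

Lemma feasible_admissible x r dv d : feasible src dst S n Intf alpha x r dv d ->
  admissible [pred A | A != set0] weighted_inflow x d.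
Proof.
case=> x_sum [r_def [balance [dv_ge x_ge0]]]; split=> // [A A_neq0 | i].
  exact/RleP/Rge_le/x_ge0.
rewrite lform_weighted_inflow ler_pdivlMr // mulrC.
have -> : node_balance x i = dv i.
  rewrite -balance /node_balance.
  by congr (_ - _); apply: eq_bigr => l _; rewrite r_def.
exact/RleP/Rge_le.
Qed.

Lemma admissible_feasible x d : admissible [pred A | A != set0] weighted_inflow x d ->
  feasible src dst S n Intf alpha x (rate x) (node_balance x) d.
Proof.
case=> x_ge0 x_sum x_lb; do 4!split=> //; last by move=> A /x_ge0 /RleP /Rle_ge.
move=> i; have := x_lb i; rewrite lform_weighted_inflow ler_pdivlMr // mulrC.
by move/RleP/Rle_ge.
Qed.

End Network.

Local Close Scope ring_scope.

Theorem theorem1 (G N L : nat) (hG : (0 < G)%N) (hN : (1 <= N)%N) (hL : (0 < L)%N)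
  (src dst : 'I_L -> vertex G N)
  (hloop : forall l : 'I_L, src l <> dst l)
  (S : 'I_L -> R) (hS : forall l, S l > 0)
  (n : R) (hn : n > 0)
  (Intf : 'I_L -> 'I_L -> R) (hI : forall k l : 'I_L, k <> l -> Intf k l >= 0)
  (alpha : 'I_N -> R) (halpha : forall i, alpha i > 0) :
  exists (x : {set 'I_L} -> R) (r : 'I_L -> R) (dv : 'I_N -> R) (d : R),
    optimal src dst S n Intf alpha x r dv d /\
    exists supp : {set {set 'I_L}},
      (#|supp| <= N)%N /\
      (forall A : {set 'I_L}, A != set0 -> A \notin supp -> x A = 0).
Proof.
(* Only the positivity of the weights matters; the rates gamma are arbitrary. *)
have alpha_pos i := introT RltP (halpha i).
have nonempty : exists A : {set 'I_L}, [pred A | A != set0] A.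
  by exists [set Ordinal hL]; rewrite /= -card_gt0 cards1.
have [x [d [x_adm x_max x_supp]]] :=
  sparse_optimum (weighted_inflow src dst S n Intf alpha) hN nonempty.
exists x, (rate S n Intf x), (node_balance src dst S n Intf x), d; split.
  split; first exact: admissible_feasible.
  by move=> x' r' dv' d' /(feasible_admissible alpha_pos) /x_max /RleP.
exists (support [pred A | A != set0] x); split=> // A A_neq0.
by rewrite inE /= A_neq0 negbK => /eqP.
Qed.
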